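(* Let $n\ge1$ and suppose that for every $0\le k<n$, $\mathbb{Z}_k$ is a $1$-Gray code for $\mathcal{Z}_k$ with $\mathrm{first}(\mathbb{Z}_k)=0(001)^\star$ and $\mathrm{last}(\mathbb{Z}_k)=(001)^\star$ (where $\mathbb{Z}_0=(\epsilon)$). Let $i,j$ be integers with $1\le j<i\le n$. Then: (i) if $3\le i+j<n$, the list $\mathbb{L}=0^i1^j\cdot\mathbb{Z}_{n-i-j}$ is a $1$-Gray code for $0^i1^j\cdot\mathcal{Z}_{n-i-j}$ with $\mathrm{first}(\mathbb{L})=0^i1^j0(001)^\star$ and $\mathrm{last}(\mathbb{L})=0^i1^j(001)^\star$; when $i+j=n$ the list $\mathbb{L}$ contains only the word $0^i1^j$; (ii) if $3\le i+j<n-1$, the list $\mathbb{L}=0^i1^{j+1}\cdot\mathbb{Z}_{n-i-j-1}\circ0^i1^j\cdot\mathbb{Z}_{n-i-j}$ is a $1$-Gray code for $0^i1^{j+1}\cdot\mathcal{Z}_{n-i-j-1}\cup0^i1^j\cdot\mathcal{Z}_{n-i-j}$ with $\mathrm{first}(\mathbb{L})=0^i1^{j+1}0(001)^\star$ and $\mathrm{last}(\mathbb{L})=0^i1^j(001)^\star$; when $i+j+1=n$, $\mathbb{L}=0^i1^{j+1}\circ0^i1^j0$; (iii) if $3\le i+j<n$, the list $\mathbb{L}=0^i1^j\cdot\mathbb{Z}_{n-i-j}\circ\overline{0^{i-1}1^{j+1}\cdot\mathbb{Z}_{n-i-j}}$ is a $1$-Gray code for $0^i1^j\cdot\mathcal{Z}_{n-i-j}\cup0^{i-1}1^{j+1}\cdot\mathcal{Z}_{n-i-j}$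 with $\mathrm{first}(\mathbb{L})=0^i1^j0(001)^\star$ and $\mathrm{last}(\mathbb{L})=0^{i-1}1^{j+1}0(001)^\star$; when $i+j=n$, $\mathbb{L}=0^i1^j\circ0^{i-1}1^{j+1}$; (iv) if $3\le i+j\le n$, the list $\mathbb{L}=\overline{0^i1^j\cdot\mathbb{Z}_{n-i-j}}\circ0^{i-1}1^{j+1}\cdot\mathbb{Z}_{n-i-j}$ is a $1$-Gray code for $0^i1^j\cdot\mathcal{Z}_{n-i-j}\cup0^{i-1}1^{j+1}\cdot\mathcal{Z}_{n-i-j}$ with $\mathrm{first}(\mathbb{L})=0^i1^j(001)^\star$ and $\mathrm{last}(\mathbb{L})=0^{i-1}1^{j+1}(001)^\star$.
   Context: A binary word is $1$-decreasing if for every maximal run of $0$s, of length $a>0$, together with the (possibly empty) maximal run of $1$s immediately following it, of length $b$, one has $a>b$. For $m\ge1$, $\mathcal{Z}_m$ is the set of $1$-decreasing words of length $m$ starting with $0$; $\mathcal{Z}_0=\{\epsilon\}$. A $1$-Gray code for a set of equal-length words is an ordered list of all its elements, each once, with consecutive words differing in at most one position. For a list $\mathbb{L}$ and a word $w$: $w\cdot\mathbb{L}$ prefixes $w$ to every word of $\mathbb{L}$ (and $w\cdot\mathcal{A}=\{wa:a\in\mathcal{A}\}$ for sets); $\circ$ is list concatenation; $\overline{\mathbb{L}}$ is the reverse list; $\mathrm{first}(\mathbb{L})$, $\mathrm{last}(\mathbb{L})$ are its first and last elements. In a word of prescribed length (here $n$) written $u(001)^\star$, $(001)^\star$ denotes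 the prefix of $001001\cdots$ of the length needed to reach that total length. *)

From mathcomp Require Import all_boot.
Set Implicit Arguments. Unset Strict Implicit. Unset Printing Implicit Defensive.

(* Binary words: false = 0, true = 1. *)
Definition word := seq bool.

Definition run0 (s : word) : nat := find id s.
Definition run1 (s : word) : nat := find negb s.

(* 1-decreasing: for every maximal run of 0s (starting at position k, i.e.
   w_k = 0 and k = 0 or w_{k-1} = 1), of length a, followed by the (possibly
   empty) maximal run of 1s of length b, one has a > b. *)
Definition one_decreasing (w : word) : Prop :=
  forall k, k < size w -> nth true w k = false ->
    (k = 0 \/ nth true w k.-1 = true) ->
    let s := drop k w in run1 (drop (run0 s) s) < run0 s.

Definition Zset (m : nat) (w : word) : Prop :=
  size w = m /\ (0 < m -> head true w = false) /\ one_decreasing w.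

Definition hamming (v w : word) : nat := count (fun p => p.1 != p.2) (zip v w).

Definition is_gray1 (L : seq word) (S : word -> Prop) : Prop :=
  [/\ uniq L, (forall w, w \in L <-> S w) & sorted (fun v w => hamming v w <= 1) L].

Definition pre_list (u : word) (L : seq word) : seq word := map (cat u) L.
Definition pre_set (u : word) (S : word -> Prop) : word -> Prop :=
  fun w => exists2 z, S z & w = u ++ z.
Definition set_union (S T : word -> Prop) : word -> Prop := fun w => S w \/ T w.

(* prefix of 001001... of length m *)
Definition star001 (m : nat) : word := mkseq (fun k => k %% 3 == 2) m.

Definition zo (a b : nat) : word := nseq a false ++ nseq b true.

Definition first (L : seq word) : word := head [::] L.
Definition lastw (L : seq word) : word := last [::] L.

From mathcomp Require Import all_boot zify.

(* Prefixing a Gray code by a fixed word, reversing it, and concatenating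
   two Gray codes of disjoint sets whose junction words differ in at most one
   bit all yield Gray codes.  In each list the two blocks are told apart by a
   single bit: 0^i 1^j and 0^(i-1) 1^(j+1) differ only where their runs meet,
   and 0^i 1^(j+1) z and 0^i 1^j z' differ at position i + j because z' starts
   with 0.  The junction words are then read off from the known first and last
   words of the Z_k, and differ in that bit only. *)

Lemma hammingC v w : hamming v w = hamming w v.
Proof.
elim: v w => [|a v IHv] [|b w] //; rewrite /hamming /= in IHv *.
by rewrite eq_sym IHv.
Qed.

Lemma hamming_catl u v w : hamming (u ++ v) (u ++ w) = hamming v w.
Proof. by elim: u => //= a u IHu; rewrite /hamming /= eqxx. Qed.

Lemma hamming_refl w : hamming w w = 0.
Proof. by elim: w => //= a w IHw; rewrite /hamming /= eqxx. Qed.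

Lemma hamming_flip u a b w : hamming (u ++ a :: w) (u ++ b :: w) <= 1.
Proof.
by rewrite hamming_catl /hamming /= -/(hamming w w) hamming_refl; case: (a != b).
Qed.

Lemma catI (u : word) : injective (cat u).
Proof. exact: (can_inj (g := drop (size u)) (fun w => drop_size_cat w erefl)). Qed.

Lemma nth_size_cat (u w : word) : nth true (u ++ w) (size u) = head true w.
Proof. by rewrite nth_cat ltnn subnn nth0. Qed.

Lemma first_pre u L : L != [::] -> first (pre_list u L) = u ++ first L.
Proof. by case: L. Qed.

Lemma lastw_pre u L : L != [::] -> lastw (pre_list u L) = u ++ lastw L.
Proof. by case: L => // x L _; rewrite /lastw /pre_list /= last_map. Qed.

Lemma pre_list_eq0 u L : (pre_list u L == [::]) = (L == [::]).
Proof. by case: L. Qed.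

Lemma first_rev (L : seq word) : first (rev L) = lastw L.
Proof. by case/lastP: L => // L x; rewrite rev_rcons /lastw last_rcons. Qed.

Lemma lastw_rev (L : seq word) : lastw (rev L) = first L.
Proof. by case: L => // x L; rewrite rev_cons /lastw last_rcons. Qed.

Lemma first_cat (L1 L2 : seq word) : L1 != [::] -> first (L1 ++ L2) = first L1.
Proof. by case: L1. Qed.

Lemma lastw_cat (L1 L2 : seq word) : L2 != [::] -> lastw (L1 ++ L2) = lastw L2.
Proof. by case: L2 => // y L2 _; rewrite /lastw last_cat. Qed.

Lemma rev_eq0 (L : seq word) : (rev L == [::]) = (L == [::]).
Proof. by rewrite -size_eq0 size_rev size_eq0. Qed.

Lemma has_mem_separated (L1 L2 : seq word) (P : pred word) :
  all P L1 -> all (predC P) L2 -> ~~ has (mem L1) L2.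
Proof.
move=> /allP P1 /allP P2; apply/hasPn => w /P2 /negP nPw.
by apply/negP => /P1.
Qed.

Lemma pre_list_flip_disjoint p q (a b : bool) L K : a != b ->
  ~~ has (mem (pre_list (p ++ a :: q) L)) (pre_list (p ++ b :: q) K).
Proof.
move=> ab; apply: (@has_mem_separated _ _ (fun w => nth true w (size p) == a)).
- by apply/allP => _ /mapP [z _ ->]; rewrite -catA nth_size_cat /=.
- by apply/allP => _ /mapP [z _ ->]; rewrite /= -catA nth_size_cat /= eq_sym.
Qed.

Lemma gray1_pre u L S : is_gray1 L S -> is_gray1 (pre_list u L) (pre_set u S).
Proof.
case=> uniqL memL sortL; split.
- by rewrite map_inj_uniq //; apply: catI.
- move=> w; split.
  + by case/mapP=> z /memL Sz ->; exists z.
  + by case=> z /memL zL ->; apply: map_f.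
- rewrite /pre_list sorted_map; apply: sub_sorted sortL => v w /=.
  by rewrite hamming_catl.
Qed.

Lemma gray1_rev L S : is_gray1 L S -> is_gray1 (rev L) S.
Proof.
case=> uniqL memL sortL; split.
- by rewrite rev_uniq.
- by move=> w; rewrite mem_rev.
- by rewrite rev_sorted; apply: sub_sorted sortL => v w; rewrite hammingC.
Qed.

Lemma gray1_cat L1 L2 S1 S2 : is_gray1 L1 S1 -> is_gray1 L2 S2 ->
  ~~ has (mem L1) L2 -> L1 != [::] -> L2 != [::] ->
  hamming (lastw L1) (first L2) <= 1 ->
  is_gray1 (L1 ++ L2) (set_union S1 S2).
Proof.
case=> uniq1 mem1 sort1 [uniq2 mem2 sort2] disj12 nz1 nz2 link; split.
- by rewrite cat_uniq uniq1 uniq2 disj12.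
- move=> w; rewrite mem_cat /set_union; split.
  + by case/orP=> [/mem1|/mem2]; auto.
  + by case=> [/mem1|/mem2] ->; rewrite ?orbT.
- case: L1 nz1 sort1 link {uniq1 mem1 disj12} => // x L1 _ sort1 link.
  case: L2 nz2 sort2 link {uniq2 mem2} => // y L2 _ sort2 link.
  rewrite /= in sort1 sort2 link.
  by rewrite sorted_cat_cons /= rcons_path sort1 link.
Qed.

Lemma zo_rcons i j : zo i j.+1 = rcons (zo i j) true.
Proof. by rewrite /zo -addn1 nseqD catA cats1. Qed.

Lemma zoSl i j : zo i.+1 j = nseq i false ++ false :: nseq j true.
Proof. by rewrite /zo; elim: i => //= i ->. Qed.

Section GrayBlocks.

Local Set Implicit Arguments.
Local Unset Strict Implicit.

Variables (n : nat) (Z : nat -> seq word).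
Hypothesis Z0 : Z 0 = [:: [::]].
Hypothesis Zgray : forall k, k < n ->
  is_gray1 (Z k) (Zset k) /\
  (0 < k -> first (Z k) = false :: star001 k.-1 /\ lastw (Z k) = star001 k).

Lemma gray1_Z m : m < n -> is_gray1 (Z m) (Zset m).
Proof. by case/Zgray. Qed.

Lemma first_Z m : 0 < m -> m < n -> first (Z m) = false :: star001 m.-1.
Proof. by move=> m0 /Zgray [_ /(_ m0) []]. Qed.

Lemma lastw_Z m : m < n -> lastw (Z m) = star001 m.
Proof. by case: m => [|m]; [rewrite Z0 | case/Zgray => _ /(_ isT) []]. Qed.

Lemma Z_neq0 m : m < n -> Z m != [::].
Proof.
case: m => [|m] mn; first by rewrite Z0.
have := @first_Z m.+1 isT mn.
by case: (Z m.+1).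
Qed.

Lemma head_Z m w : 0 < m -> m < n -> w \in Z m -> head true w = false.
Proof. by move=> m0 /gray1_Z [_ memZ _] /memZ [_ [/(_ m0)]]. Qed.

Lemma Z1 : 1 < n -> Z 1 = [:: [:: false]].
Proof.
move=> n1; have [uniqZ memZ _] := gray1_Z n1.
have singleton w : w \in Z 1 -> w = [:: false].
  move=> w1; have [size_w [/(_ isT) head_w _]] := (memZ w).1 w1.
  by case: w size_w head_w {w1} => [|b [|]] //= _ ->.
move: (@first_Z 1 isT n1) uniqZ singleton; case: (Z 1) => // x [|y L] /= -> //.
case/andP=> false_notin _ /(_ y); rewrite !inE eqxx orbT => /(_ isT) y_false.
by rewrite y_false mem_head in false_notin.
Qed.

Lemma pre_Z0 u : pre_list u (Z 0) = [:: u].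
Proof. by rewrite Z0 /pre_list /= cats0. Qed.

Lemma pre_Z_neq0 u m : m < n -> pre_list u (Z m) != [::].
Proof. by move=> mn; rewrite pre_list_eq0 Z_neq0. Qed.

Lemma first_pre_Z u m : 0 < m -> m < n ->
  first (pre_list u (Z m)) = u ++ false :: star001 m.-1.
Proof. by move=> m0 mn; rewrite first_pre ?Z_neq0 ?first_Z. Qed.

Lemma lastw_pre_Z u m : m < n -> lastw (pre_list u (Z m)) = u ++ star001 m.
Proof. by move=> mn; rewrite lastw_pre ?Z_neq0 ?lastw_Z. Qed.

Lemma gray1_pre_Z u m : 0 < m -> m < n ->
  [/\ is_gray1 (pre_list u (Z m)) (pre_set u (Zset m)),
      first (pre_list u (Z m)) = u ++ false :: star001 m.-1
    & lastw (pre_list u (Z m)) = u ++ star001 m].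
Proof.
move=> m0 mn; rewrite first_pre_Z ?lastw_pre_Z //.
by split=> //; exact/gray1_pre/gray1_Z.
Qed.

Lemma gray1_pre_Z_rcons u m : 0 < m -> m.+1 < n ->
  let L := pre_list (rcons u true) (Z m) ++ pre_list u (Z m.+1) in
  [/\ is_gray1 L (set_union (pre_set (rcons u true) (Zset m))
                            (pre_set u (Zset m.+1))),
      first L = rcons u true ++ false :: star001 m.-1
    & lastw L = u ++ star001 m.+1].
Proof.
move=> m0 m1n L; have mn := ltnW m1n.
rewrite /L first_cat ?lastw_cat ?pre_Z_neq0 // first_pre_Z ?lastw_pre_Z //.
split=> //; apply: gray1_cat; rewrite ?pre_Z_neq0 //.
- exact/gray1_pre/gray1_Z.
- exact/gray1_pre/gray1_Z.
- apply: (@has_mem_separated _ _ (fun w => nth true w (size u))).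
  + by apply/allP => _ /mapP [z _ ->]; rewrite cat_rcons nth_size_cat.
  + apply/allP => _ /mapP [z zZ ->] /=.
    by rewrite nth_size_cat (head_Z (ltn0Sn m) m1n zZ).
- by rewrite lastw_pre_Z ?first_pre_Z // cat_rcons hamming_flip.
Qed.

Lemma gray1_pre_Z_cat_rev p q a b m : a != b -> 0 < m -> m < n ->
  let u := p ++ a :: q in let v := p ++ b :: q in
  let L := pre_list u (Z m) ++ rev (pre_list v (Z m)) in
  [/\ is_gray1 L (set_union (pre_set u (Zset m)) (pre_set v (Zset m))),
      first L = u ++ false :: star001 m.-1
    & lastw L = v ++ false :: star001 m.-1].
Proof.
move=> ab m0 mn u v L.
rewrite /L first_cat ?lastw_cat ?rev_eq0 ?pre_Z_neq0 // lastw_rev !first_pre_Z //.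
split=> //; apply: gray1_cat; rewrite ?rev_eq0 ?pre_Z_neq0 //.
- exact/gray1_pre/gray1_Z.
- exact/gray1_rev/gray1_pre/gray1_Z.
- by rewrite has_rev pre_list_flip_disjoint.
- by rewrite first_rev !lastw_pre_Z // -!catA hamming_flip.
Qed.

Lemma gray1_rev_pre_Z_cat p q a b m : a != b -> m < n ->
  let u := p ++ a :: q in let v := p ++ b :: q in
  let L := rev (pre_list u (Z m)) ++ pre_list v (Z m) in
  [/\ is_gray1 L (set_union (pre_set u (Zset m)) (pre_set v (Zset m))),
      first L = u ++ star001 m
    & lastw L = v ++ star001 m].
Proof.
move=> ab mn u v L.
rewrite /L first_cat ?lastw_cat ?rev_eq0 ?pre_Z_neq0 // first_rev !lastw_pre_Z //.
split=> //; apply: gray1_cat; rewrite ?rev_eq0 ?pre_Z_neq0 //.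
- exact/gray1_rev/gray1_pre/gray1_Z.
- exact/gray1_pre/gray1_Z.
- by rewrite has_sym has_rev has_sym pre_list_flip_disjoint.
- by rewrite lastw_rev !first_pre ?Z_neq0 // -!catA hamming_flip.
Qed.

End GrayBlocks.

Theorem lemma3 (n : nat) (Z : nat -> seq word) (i j : nat) :
  1 <= n ->
  Z 0 = [:: [::]] ->
  (forall k, k < n ->
     is_gray1 (Z k) (Zset k) /\
     (0 < k -> first (Z k) = false :: star001 k.-1 /\ lastw (Z k) = star001 k)) ->
  1 <= j -> j < i -> i <= n ->
  (* (i) *)
  ((3 <= i + j < n ->
     let L := pre_list (zo i j) (Z (n - i - j)) in
     [/\ is_gray1 L (pre_set (zo i j) (Zset (n - i - j))),
         first L = zo i j ++ false :: star001 (n - i - j).-1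
       & lastw L = zo i j ++ star001 (n - i - j)]) /\
   (i + j = n -> pre_list (zo i j) (Z (n - i - j)) = [:: zo i j])) /\
  (* (ii) *)
  ((3 <= i + j < n.-1 ->
     let L := pre_list (zo i j.+1) (Z (n - i - j.+1))
                ++ pre_list (zo i j) (Z (n - i - j)) in
     [/\ is_gray1 L (set_union (pre_set (zo i j.+1) (Zset (n - i - j.+1)))
                               (pre_set (zo i j) (Zset (n - i - j)))),
         first L = zo i j.+1 ++ false :: star001 (n - i - j.+1).-1
       & lastw L = zo i j ++ star001 (n - i - j)]) /\
   (i + j + 1 = n ->
     pre_list (zo i j.+1) (Z (n - i - j.+1)) ++ pre_list (zo i j) (Z (n - i - j))
       = [:: zo i j.+1; zo i j ++ [:: false]])) /\
  (* (iii) *)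
  ((3 <= i + j < n ->
     let L := pre_list (zo i j) (Z (n - i - j))
                ++ rev (pre_list (zo i.-1 j.+1) (Z (n - i - j))) in
     [/\ is_gray1 L (set_union (pre_set (zo i j) (Zset (n - i - j)))
                               (pre_set (zo i.-1 j.+1) (Zset (n - i - j)))),
         first L = zo i j ++ false :: star001 (n - i - j).-1
       & lastw L = zo i.-1 j.+1 ++ false :: star001 (n - i - j).-1]) /\
   (i + j = n ->
     pre_list (zo i j) (Z (n - i - j)) ++ rev (pre_list (zo i.-1 j.+1) (Z (n - i - j)))
       = [:: zo i j; zo i.-1 j.+1])) /\
  (* (iv) *)
  (3 <= i + j <= n ->
     let L := rev (pre_list (zo i j) (Z (n - i - j)))
                ++ pre_list (zo i.-1 j.+1) (Z (n - i - j)) in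
     [/\ is_gray1 L (set_union (pre_set (zo i j) (Zset (n - i - j)))
                               (pre_set (zo i.-1 j.+1) (Zset (n - i - j)))),
         first L = zo i j ++ star001 (n - i - j)
       & lastw L = zo i.-1 j.+1 ++ star001 (n - i - j)]).
Proof.
move=> n_gt0 Z0 Zgray j_gt0 ji i_le_n.
case: i ji i_le_n => // i ji i_le_n; rewrite succnK.
split; [split | split; [split | split; [split |]]].
- by move=> /andP[_ ijn]; apply: (gray1_pre_Z Z0 Zgray); lia.
- by move=> ijn; rewrite (_ : n - i.+1 - j = 0) ?(pre_Z0 Z0) //; lia.
- move=> /andP[_ ijn].
  rewrite zo_rcons (_ : n - i.+1 - j = (n - i.+1 - j.+1).+1); last lia.
  by apply: (gray1_pre_Z_rcons Z0 Zgray); lia.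
- move=> ijn; have n1 : 1 < n by lia.
  rewrite (_ : n - i.+1 - j.+1 = 0); last lia.
  rewrite (_ : n - i.+1 - j = 1); last lia.
  by rewrite (pre_Z0 Z0) (Z1 Zgray n1).
- move=> /andP[_ ijn]; rewrite zoSl.
  by apply: (gray1_pre_Z_cat_rev Z0 Zgray); lia.
- by move=> ijn; rewrite (_ : n - i.+1 - j = 0) ?(pre_Z0 Z0) //; lia.
- move=> /andP[_ ijn]; rewrite zoSl.
  by apply: (gray1_rev_pre_Z_cat Z0 Zgray); lia.
Qed.
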